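(* Consider the lower-bound type system, and assume the program is well-typed w.r.t. the signature $\Sigma$ in that system. Let $\models E:\Gamma$, $E\vdash e\Downarrow v$, and suppose $\Sigma;\Gamma\vdash^{q}_{q'}e:A$ is derivable in the lower-bound type system. Then for all $p,r\in\mathbb Q_{\ge0}$ with $p<q+\Phi_E(\Gamma)+r$ there is no $p'\in\mathbb Q_{\ge0}$ such that $E\vdash^{p}_{p'}e\Downarrow v$ and $p'\ge q'+\Phi(v:A)+r$.
   Context: Base types: $T ::= \mathsf{unit}\mid\mathsf{bool}\mid\mathsf{int}\mid L(T)\mid T*T$. Values: $v ::= () \mid \mathsf{true}\mid\mathsf{false}\mid n\ (n\in\mathbb Z)\mid [v_1,\dots,v_n]\ (n\ge 0$, the empty list being $\mathsf{nil})\mid (v_1,v_2)$. Value typing $\models v:T$: $()$ has type $\mathsf{unit}$, booleans have type $\mathsf{bool}$, integers have type $\mathsf{int}$, $(v_1,v_2):T_1*T_2$ if $\models v_i:T_i$, and $[v_1,\dots,v_n]:L(T)$ if every $\models v_i:T$ (so $\mathsf{nil}$ has every list type). Expressions (let-normal form; $x,x_i$ are variables, $f$ function identifiers): $e ::= () \mid \mathsf{true}\mid \mathsf{false}\mid n\mid x\mid \mathrm{op}_\diamond(x_1,x_2)\mid \mathrm{app}(f,x)\mid \mathrm{if}(x,e_t,e_f)\mid \mathrm{let}(x,e_1,x.e_2)\mid \mathrm{pair}(x_1,x_2)\mid \mathrm{match}(x,(x_1,x_2).e)\mid \mathsf{nil}\mid \mathrm{cons}(x_1,x_2)\mid\mathrm{match}(x,e_1,(x_h,x_t).e_2)\mid\mathrm{share}(x,(x_1,x_2).e)$,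 with $\diamond\in\{+,-,*,\mathrm{div},\mathrm{mod},=,<>,<,>,\mathrm{and},\mathrm{or}\}$. A program fixes for each function identifier $f$ a body $e_f$ with a single parameter variable $y^f$. An environment $E$ is a finite map from variables to values. Cost semantics: fix arbitrary rational constants $K^{\mathrm{unit}},K^{\mathrm{bool}},K^{\mathrm{int}},K^{\mathrm{nil}},K^{\mathrm{var}},K^{\mathrm{op}},K^{\mathrm{app}},K^{\mathrm{let}},K^{\mathrm{cond}},K^{\mathrm{pair}},K^{\mathrm{matchP}},K^{\mathrm{cons}},K^{\mathrm{matchN}},K^{\mathrm{matchL}}$. The judgement $E\vdash^{q}_{q'} e\Downarrow v$ (all counters $q,q'$ occurring in derivations are in $\mathbb Q_{\ge0}$) is defined inductively: $E\vdash^{q+K^{c}}_{q}c\Downarrow c$ for constants $c\in\{(),\mathsf{true},\mathsf{false},n,\mathsf{nil}\}$ with the corresponding constant $K^{\mathrm{unit}},K^{\mathrm{bool}},K^{\mathrm{int}},K^{\mathrm{nil}}$; $E\vdash^{q+K^{\mathrm{var}}}_q x\Downarrow E(x)$ for $x\in\mathrm{dom}(E)$; $E\vdash^{q+K^{\mathrm{op}}}_q\mathrm{op}_\diamond(x_1,x_2)\Downarrow E(x_1)\diamond E(x_2)$; $E\vdash^{q+K^{\mathrm{pair}}}_q \mathrm{pair}(x_1,x_2)\Downarrow (E(x_1),E(x_2))$; $E\vdash^{q+K^{\mathrm{cons}}}_q\mathrm{cons}(x_h,x_t)\Downarrow[v_1,\dots,v_n]$ if $E(x_h)=v_1$ and $E(x_t)=[v_2,\dots,v_n]$;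 if $E[y^f\mapsto E(x)]\vdash^q_{q'}e_f\Downarrow v$ then $E\vdash^{q+K^{\mathrm{app}}}_{q'}\mathrm{app}(f,x)\Downarrow v$; if $E\vdash^{q-K^{\mathrm{let}}}_{q_1}e_1\Downarrow v_1$ and $E[x\mapsto v_1]\vdash^{q_1}_{q'}e_2\Downarrow v$ then $E\vdash^q_{q'}\mathrm{let}(x,e_1,x.e_2)\Downarrow v$; if $E(x)=\mathsf{true}$ and $E\vdash^{q-K^{\mathrm{cond}}}_{q'}e_t\Downarrow v$ (resp. $E(x)=\mathsf{false}$ and $E\vdash^{q-K^{\mathrm{cond}}}_{q'}e_f\Downarrow v$) then $E\vdash^q_{q'}\mathrm{if}(x,e_t,e_f)\Downarrow v$; if $E(x)=(v_1,v_2)$ and $E[x_1\mapsto v_1,x_2\mapsto v_2]\vdash^{q-K^{\mathrm{matchP}}}_{q'}e\Downarrow v$ then $E\vdash^q_{q'}\mathrm{match}(x,(x_1,x_2).e)\Downarrow v$; if $E(x)=\mathsf{nil}$ and $E\vdash^{q-K^{\mathrm{matchN}}}_{q'}e_1\Downarrow v$ then $E\vdash^q_{q'}\mathrm{match}(x,e_1,(x_h,x_t).e_2)\Downarrow v$; if $E(x)=[v_1,\dots,v_n]$ with $n\ge1$ and $E[x_h\mapsto v_1,x_t\mapsto[v_2,\dots,v_n]]\vdash^{q-K^{\mathrm{matchL}}}_{q'}e_2\Downarrow v$ then $E\vdash^q_{q'}\mathrm{match}(x,e_1,(x_h,x_t).e_2)\Downarrow v$; if $E(x)=v_1$ and $(E\setminus\{x\})[x_1\mapsto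 v_1,x_2\mapsto v_1]\vdash^q_{q'}e\Downarrow v$ then $E\vdash^q_{q'}\mathrm{share}(x,(x_1,x_2).e)\Downarrow v$. We write $E\vdash e\Downarrow v$ if $E\vdash^q_{q'}e\Downarrow v$ for some $q,q'$. Resource-annotated types: $A ::= \mathsf{unit}\mid\mathsf{bool}\mid\mathsf{int}\mid L^p(A)\mid A*A$ with $p\in\mathbb Q_{\ge0}$; $|A|$ denotes the base type obtained by erasing annotations. An annotated context $\Gamma$ is a finite map from variables to annotated types; $\Gamma_1,\Gamma_2$ denotes the union of contexts with disjoint domains (contexts are unordered). $\models E:\Gamma$ means $\models E(x):|\Gamma(x)|$ for all $x\in\mathrm{dom}(\Gamma)$. Potential: $\Phi(v:A)=0$ for $A\in\{\mathsf{unit},\mathsf{bool},\mathsf{int}\}$; $\Phi((v_1,v_2):A_1*A_2)=\Phi(v_1:A_1)+\Phi(v_2:A_2)$; $\Phi([v_1,\dots,v_n]:L^p(A))=n\cdot p+\sum_{i=1}^n\Phi(v_i:A)$; $\Phi_E(\Gamma)=\sum_{x\in\mathrm{dom}(\Gamma)}\Phi(E(x):\Gamma(x))$. Sharing relation: $\curlyvee(A\mid A,A)$ for $A\in\{\mathsf{unit},\mathsf{bool},\mathsf{int}\}$; $\curlyvee(A*B\mid A_1*B_1,A_2*B_2)$ if $\curlyvee(A\mid A_1,A_2)$ and $\curlyvee(B\mid B_1,B_2)$; $\curlyvee(L^p(A)\mid L^{p_1}(A_1),L^{p_2}(A_2))$ if $\curlyvee(A\mid A_1,A_2)$ and $p=p_1+p_2$.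 Subtyping $\preceq$: $A\preceq A$ for atoms; $L^{p_1}(A_1)\preceq L^{p_2}(A_2)$ if $A_1\preceq A_2$ and $p_1\le p_2$; $A_1*B_1\preceq A_2*B_2$ if $A_1\preceq A_2$ and $B_1\preceq B_2$. A signature $\Sigma$ maps function identifiers to nonempty sets of annotated function types $A_1\xrightarrow{q/q'}A_2$ ($q,q'\in\mathbb Q_{\ge0}$). Typing judgements $\Sigma;\Gamma\vdash^{q}_{q'}e:A$ with $q,q'\in\mathbb Q_{\ge0}$ (every annotation in a rule instance must be a nonnegative rational). Syntax-directed rules: $\Sigma;\emptyset\vdash^{K^{\mathrm{unit}}}_0():\mathsf{unit}$; $\Sigma;\emptyset\vdash^{K^{\mathrm{bool}}}_0 b:\mathsf{bool}$; $\Sigma;\emptyset\vdash^{K^{\mathrm{int}}}_0 n:\mathsf{int}$; $\Sigma;\emptyset\vdash^{K^{\mathrm{nil}}}_0\mathsf{nil}:L^p(A)$; $\Sigma;x:A\vdash^{K^{\mathrm{var}}}_0x:A$; $\Sigma;x_1:\mathsf{bool},x_2:\mathsf{bool}\vdash^{K^{\mathrm{op}}}_0\mathrm{op}_\diamond(x_1,x_2):\mathsf{bool}$ for $\diamond\in\{\mathrm{and},\mathrm{or}\}$; $\Sigma;x_1:\mathsf{int},x_2:\mathsf{int}\vdash^{K^{\mathrm{op}}}_0\mathrm{op}_\diamond(x_1,x_2):\mathsf{bool}$ for comparisons and $:\mathsf{int}$ for $+,-,*,\mathrm{div},\mathrm{mod}$; if $A_1\xrightarrow{q/q'}A_2\in\Sigma(f)$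 then $\Sigma;x:A_1\vdash^{q+K^{\mathrm{app}}}_{q'}\mathrm{app}(f,x):A_2$; from $\Sigma;\Gamma_1\vdash^{q-K^{\mathrm{let}}}_{q_1}e_1:A_1$ and $\Sigma;\Gamma_2,x:A_1\vdash^{q_1}_{q'}e_2:A_2$ infer $\Sigma;\Gamma_1,\Gamma_2\vdash^q_{q'}\mathrm{let}(x,e_1,x.e_2):A_2$; from $\Sigma;\Gamma\vdash^{q-K^{\mathrm{cond}}}_{q'}e_t:A$ and $\Sigma;\Gamma\vdash^{q-K^{\mathrm{cond}}}_{q'}e_f:A$ infer $\Sigma;\Gamma,x:\mathsf{bool}\vdash^q_{q'}\mathrm{if}(x,e_t,e_f):A$; $\Sigma;x_1:A_1,x_2:A_2\vdash^{K^{\mathrm{pair}}}_0\mathrm{pair}(x_1,x_2):A_1*A_2$; from $\Sigma;\Gamma,x_1:A_1,x_2:A_2\vdash^{q-K^{\mathrm{matchP}}}_{q'}e:A$ infer $\Sigma;\Gamma,x:A_1*A_2\vdash^q_{q'}\mathrm{match}(x,(x_1,x_2).e):A$; $\Sigma;x_h:A,x_t:L^p(A)\vdash^{p+K^{\mathrm{cons}}}_0\mathrm{cons}(x_h,x_t):L^p(A)$; from $\Sigma;\Gamma\vdash^{q-K^{\mathrm{matchN}}}_{q'}e_1:B$ and $\Sigma;\Gamma,x_h:A,x_t:L^p(A)\vdash^{q+p-K^{\mathrm{matchL}}}_{q'}e_2:B$ infer $\Sigma;\Gamma,x:L^p(A)\vdash^q_{q'}\mathrm{match}(x,e_1,(x_h,x_t).e_2):B$;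 from $\Sigma;\Gamma,x_1:A_1,x_2:A_2\vdash^q_{q'}e:B$ and $\curlyvee(A\mid A_1,A_2)$ infer $\Sigma;\Gamma,x:A\vdash^q_{q'}\mathrm{share}(x,(x_1,x_2).e):B$. Structural rules of the lower-bound system: (Relax) from $\Sigma;\Gamma\vdash^p_{p'}e:A$, $q\ge p$ and $q-p\le q'-p'$ infer $\Sigma;\Gamma\vdash^q_{q'}e:A$; (Weakening) from $\Sigma;\Gamma\vdash^q_{q'}e:B$ and $\curlyvee(A\mid A,A)$ infer $\Sigma;\Gamma,x:A\vdash^q_{q'}e:B$; (Subtype) from $\Sigma;\Gamma\vdash^q_{q'}e:A$ and $A\preceq B$ infer $\Sigma;\Gamma\vdash^q_{q'}e:B$; (Supertype) from $\Sigma;\Gamma,x:B\vdash^q_{q'}e:C$ and $A\preceq B$ infer $\Sigma;\Gamma,x:A\vdash^q_{q'}e:C$. The program is well-typed w.r.t. $\Sigma$ in this system if for every $f$ and every $A_1\xrightarrow{q/q'}A_2\in\Sigma(f)$, $\Sigma;y^f:A_1\vdash^q_{q'}e_f:A_2$ is derivable. *)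

(* Q for counters (related up to Qeq), Qc (canonical rationals)
   for the annotations inside resource-annotated types. *)
From Stdlib Require Import QArith Qcanon ZArith List Permutation.
Import ListNotations.
Open Scope Q_scope.

Definition var := nat.
Definition fid := nat.

Inductive ty : Type :=
| TUnit | TBool | TInt | TList (T : ty) | TProd (T1 T2 : ty).

Inductive val : Type :=
| VUnit | VBool (b : bool) | VInt (n : Z) | VList (vs : list val) | VPair (v1 v2 : val).

Inductive vtyped : val -> ty -> Prop :=
| vt_unit : vtyped VUnit TUnit
| vt_bool b : vtyped (VBool b) TBool
| vt_int n : vtyped (VInt n) TInt
| vt_pair v1 v2 T1 T2 : vtyped v1 T1 -> vtyped v2 T2 -> vtyped (VPair v1 v2) (TProd T1 T2)
| vt_list vs T : (forall v, In v vs -> vtyped v T) -> vtyped (VList vs) (TList T).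

Inductive binop : Type :=
| OAdd | OSub | OMul | ODiv | OMod | OEq | ONeq | OLt | OGt | OAnd | OOr.

(* expressions in let-normal form *)
Inductive expr : Type :=
| EUnit | EBool (b : bool) | EInt (n : Z) | EVar (x : var)
| EOp (o : binop) (x1 x2 : var)
| EApp (f : fid) (x : var)
| EIf (x : var) (et ef : expr)
| ELet (x : var) (e1 e2 : expr)
| EPair (x1 x2 : var)
| EMatchP (x x1 x2 : var) (e : expr)
| ENil
| ECons (xh xt : var)
| EMatchL (x : var) (e1 : expr) (xh xt : var) (e2 : expr)
| EShare (x x1 x2 : var) (e : expr).

Definition eval_op (o : binop) (v1 v2 : val) : option val :=
  match o, v1, v2 with
  | OAdd, VInt a, VInt b => Some (VInt (a + b)%Z)
  | OSub, VInt a, VInt b => Some (VInt (a - b)%Z)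
  | OMul, VInt a, VInt b => Some (VInt (a * b)%Z)
  | ODiv, VInt a, VInt b => if Z.eqb b 0 then None else Some (VInt (Z.div a b))
  | OMod, VInt a, VInt b => if Z.eqb b 0 then None else Some (VInt (Z.modulo a b))
  | OEq, VInt a, VInt b => Some (VBool (Z.eqb a b))
  | ONeq, VInt a, VInt b => Some (VBool (negb (Z.eqb a b)))
  | OLt, VInt a, VInt b => Some (VBool (Z.ltb a b))
  | OGt, VInt a, VInt b => Some (VBool (Z.ltb b a))
  | OAnd, VBool a, VBool b => Some (VBool (andb a b))
  | OOr, VBool a, VBool b => Some (VBool (orb a b))
  | _, _, _ => None
  end.

Record costs : Type := {
  Kunit : Q; Kbool : Q; Kint : Q; Knil : Q; Kvar : Q; Kop : Q; Kapp : Q;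
  Klet : Q; Kcond : Q; Kpair : Q; KmatchP : Q; Kcons : Q; KmatchN : Q; KmatchL : Q }.

Record program : Type := { pparam : fid -> var; pbody : fid -> expr }.

Definition env := var -> option val.
Definition upd (E : env) (x : var) (v : val) : env :=
  fun y => if Nat.eqb y x then Some v else E y.
Definition remove (E : env) (x : var) : env :=
  fun y => if Nat.eqb y x then None else E y.

Inductive eval (K : costs) (P : program) : env -> Q -> Q -> expr -> val -> Prop :=
| ev_unit E q q' : 0 <= q -> 0 <= q' -> q == q' + Kunit K -> eval K P E q q' EUnit VUnit
| ev_bool E b q q' : 0 <= q -> 0 <= q' -> q == q' + Kbool K -> eval K P E q q' (EBool b) (VBool b)
| ev_int E n q q' : 0 <= q -> 0 <= q' -> q == q' + Kint K -> eval K P E q q' (EInt n) (VInt n)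
| ev_nil E q q' : 0 <= q -> 0 <= q' -> q == q' + Knil K -> eval K P E q q' ENil (VList [])
| ev_var E x v q q' : 0 <= q -> 0 <= q' -> E x = Some v -> q == q' + Kvar K ->
    eval K P E q q' (EVar x) v
| ev_op E o x1 x2 v1 v2 v q q' : 0 <= q -> 0 <= q' ->
    E x1 = Some v1 -> E x2 = Some v2 -> eval_op o v1 v2 = Some v -> q == q' + Kop K ->
    eval K P E q q' (EOp o x1 x2) v
| ev_pair E x1 x2 v1 v2 q q' : 0 <= q -> 0 <= q' ->
    E x1 = Some v1 -> E x2 = Some v2 -> q == q' + Kpair K ->
    eval K P E q q' (EPair x1 x2) (VPair v1 v2)
| ev_cons E xh xt v1 vs q q' : 0 <= q -> 0 <= q' ->
    E xh = Some v1 -> E xt = Some (VList vs) -> q == q' + Kcons K ->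
    eval K P E q q' (ECons xh xt) (VList (v1 :: vs))
| ev_app E f x va v q0 q q' : 0 <= q -> 0 <= q' -> E x = Some va ->
    eval K P (upd E (pparam P f) va) q0 q' (pbody P f) v -> q == q0 + Kapp K ->
    eval K P E q q' (EApp f x) v
| ev_let E x e1 e2 v1 v qa q1 q q' : 0 <= q -> 0 <= q' ->
    eval K P E qa q1 e1 v1 -> eval K P (upd E x v1) q1 q' e2 v -> qa == q - Klet K ->
    eval K P E q q' (ELet x e1 e2) v
| ev_if_true E x et ef v qa q q' : 0 <= q -> 0 <= q' -> E x = Some (VBool true) ->
    eval K P E qa q' et v -> qa == q - Kcond K -> eval K P E q q' (EIf x et ef) v
| ev_if_false E x et ef v qa q q' : 0 <= q -> 0 <= q' -> E x = Some (VBool false) ->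
    eval K P E qa q' ef v -> qa == q - Kcond K -> eval K P E q q' (EIf x et ef) v
| ev_matchP E x x1 x2 e v1 v2 v qa q q' : 0 <= q -> 0 <= q' -> E x = Some (VPair v1 v2) ->
    eval K P (upd (upd E x1 v1) x2 v2) qa q' e v -> qa == q - KmatchP K ->
    eval K P E q q' (EMatchP x x1 x2 e) v
| ev_matchN E x e1 xh xt e2 v qa q q' : 0 <= q -> 0 <= q' -> E x = Some (VList []) ->
    eval K P E qa q' e1 v -> qa == q - KmatchN K ->
    eval K P E q q' (EMatchL x e1 xh xt e2) v
| ev_matchL E x e1 xh xt e2 vh vt v qa q q' : 0 <= q -> 0 <= q' ->
    E x = Some (VList (vh :: vt)) ->
    eval K P (upd (upd E xh vh) xt (VList vt)) qa q' e2 v -> qa == q - KmatchL K ->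
    eval K P E q q' (EMatchL x e1 xh xt e2) v
| ev_share E x x1 x2 e v1 v q q' : 0 <= q -> 0 <= q' -> E x = Some v1 ->
    eval K P (upd (upd (remove E x) x1 v1) x2 v1) q q' e v ->
    eval K P E q q' (EShare x x1 x2 e) v.

Definition evals (K : costs) (P : program) (E : env) (e : expr) (v : val) : Prop :=
  exists q q', eval K P E q q' e v.

Inductive aty : Type :=
| AUnit | ABool | AInt | AList (p : Qc) (A : aty) | AProd (A1 A2 : aty).

Fixpoint erase (A : aty) : ty :=
  match A with
  | AUnit => TUnit | ABool => TBool | AInt => TInt
  | AList _ B => TList (erase B)
  | AProd A1 A2 => TProd (erase A1) (erase A2)
  end.

Fixpoint aty_nn (A : aty) : Prop :=
  match A with
  | AUnit | ABool | AInt => True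
  | AList p B => 0 <= this p /\ aty_nn B
  | AProd A1 A2 => aty_nn A1 /\ aty_nn A2
  end.

Fixpoint pot (v : val) (A : aty) {struct A} : Q :=
  match A, v with
  | AList p B, VList vs =>
      inject_Z (Z.of_nat (length vs)) * this p
      + fold_right (fun w acc => pot w B + acc) 0 vs
  | AProd A1 A2, VPair v1 v2 => pot v1 A1 + pot v2 A2
  | _, _ => 0
  end.

(* annotated contexts: finite maps var -> aty, as lists with distinct keys;
   order is irrelevant (see the permutation rule ty_perm) *)
Definition ctx := list (var * aty).
Definition ctx_ok (G : ctx) : Prop := NoDup (map fst G).
Definition ctx_nn (G : ctx) : Prop := forall x A, In (x, A) G -> aty_nn A.

Definition env_models (E : env) (G : ctx) : Prop :=
  forall x A, In (x, A) G -> exists v, E x = Some v /\ vtyped v (erase A).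

Definition ctx_pot (E : env) (G : ctx) : Q :=
  fold_right (fun xA acc =>
    match E (fst xA) with Some v => pot v (snd xA) | None => 0 end + acc) 0 G.

Inductive share : aty -> aty -> aty -> Prop :=
| sh_unit : share AUnit AUnit AUnit
| sh_bool : share ABool ABool ABool
| sh_int : share AInt AInt AInt
| sh_prod A B A1 B1 A2 B2 : share A A1 A2 -> share B B1 B2 ->
    share (AProd A B) (AProd A1 B1) (AProd A2 B2)
| sh_list p A p1 A1 p2 A2 : share A A1 A2 -> this p == this p1 + this p2 ->
    share (AList p A) (AList p1 A1) (AList p2 A2).

Inductive subty : aty -> aty -> Prop :=
| st_unit : subty AUnit AUnit
| st_bool : subty ABool ABool
| st_int : subty AInt AInt
| st_list p1 A1 p2 A2 : subty A1 A2 -> this p1 <= this p2 -> subty (AList p1 A1) (AList p2 A2)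
| st_prod A1 B1 A2 B2 : subty A1 A2 -> subty B1 B2 -> subty (AProd A1 B1) (AProd A2 B2).

Record funty : Type := { farg : aty; fq : Q; fq' : Q; fres : aty }.
Definition signature := fid -> funty -> Prop.

Definition is_signature (S : signature) : Prop :=
  (forall f, exists t, S f t) /\
  (forall f t, S f t -> aty_nn (farg t) /\ 0 <= fq t /\ 0 <= fq' t /\ aty_nn (fres t)).

Definition op_type (o : binop) : aty * aty :=
  match o with
  | OAnd | OOr => (ABool, ABool)
  | OEq | ONeq | OLt | OGt => (AInt, ABool)
  | OAdd | OSub | OMul | ODiv | OMod => (AInt, AInt)
  end.

Definition jok (G : ctx) (q q' : Q) (A : aty) : Prop :=
  ctx_ok G /\ ctx_nn G /\ aty_nn A /\ 0 <= q /\ 0 <= q'.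

Inductive typing (K : costs) (S : signature) : ctx -> Q -> Q -> expr -> aty -> Prop :=
| ty_unit q q' : jok [] q q' AUnit -> q == Kunit K -> q' == 0 -> typing K S [] q q' EUnit AUnit
| ty_bool b q q' : jok [] q q' ABool -> q == Kbool K -> q' == 0 -> typing K S [] q q' (EBool b) ABool
| ty_int n q q' : jok [] q q' AInt -> q == Kint K -> q' == 0 -> typing K S [] q q' (EInt n) AInt
| ty_nil p A q q' : jok [] q q' (AList p A) -> q == Knil K -> q' == 0 ->
    typing K S [] q q' ENil (AList p A)
| ty_var x A q q' : jok [(x, A)] q q' A -> q == Kvar K -> q' == 0 ->
    typing K S [(x, A)] q q' (EVar x) A
| ty_op o x1 x2 q q' : jok [(x1, fst (op_type o)); (x2, fst (op_type o))] q q' (snd (op_type o)) ->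
    q == Kop K -> q' == 0 ->
    typing K S [(x1, fst (op_type o)); (x2, fst (op_type o))] q q' (EOp o x1 x2) (snd (op_type o))
| ty_app f t x q q' : S f t -> jok [(x, farg t)] q q' (fres t) ->
    q == fq t + Kapp K -> q' == fq' t ->
    typing K S [(x, farg t)] q q' (EApp f x) (fres t)
| ty_let G1 G2 x e1 e2 A1 A2 qa q1 q q' :
    typing K S G1 qa q1 e1 A1 -> typing K S ((x, A1) :: G2) q1 q' e2 A2 ->
    qa == q - Klet K -> jok (G1 ++ G2) q q' A2 ->
    typing K S (G1 ++ G2) q q' (ELet x e1 e2) A2
| ty_if G x et ef A qa q q' :
    typing K S G qa q' et A -> typing K S G qa q' ef A -> qa == q - Kcond K ->
    jok ((x, ABool) :: G) q q' A ->
    typing K S ((x, ABool) :: G) q q' (EIf x et ef) A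
| ty_pair x1 x2 A1 A2 q q' : jok [(x1, A1); (x2, A2)] q q' (AProd A1 A2) ->
    q == Kpair K -> q' == 0 ->
    typing K S [(x1, A1); (x2, A2)] q q' (EPair x1 x2) (AProd A1 A2)
| ty_matchP G x x1 x2 e A1 A2 B qa q q' :
    typing K S ((x1, A1) :: (x2, A2) :: G) qa q' e B -> qa == q - KmatchP K ->
    jok ((x, AProd A1 A2) :: G) q q' B ->
    typing K S ((x, AProd A1 A2) :: G) q q' (EMatchP x x1 x2 e) B
| ty_cons xh xt p A q q' : jok [(xh, A); (xt, AList p A)] q q' (AList p A) ->
    q == this p + Kcons K -> q' == 0 ->
    typing K S [(xh, A); (xt, AList p A)] q q' (ECons xh xt) (AList p A)
| ty_matchL G x e1 xh xt e2 p A B qa qb q q' :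
    typing K S G qa q' e1 B ->
    typing K S ((xh, A) :: (xt, AList p A) :: G) qb q' e2 B ->
    qa == q - KmatchN K -> qb == q + this p - KmatchL K ->
    jok ((x, AList p A) :: G) q q' B ->
    typing K S ((x, AList p A) :: G) q q' (EMatchL x e1 xh xt e2) B
| ty_share G x x1 x2 e A A1 A2 B q q' :
    typing K S ((x1, A1) :: (x2, A2) :: G) q q' e B -> share A A1 A2 ->
    jok ((x, A) :: G) q q' B ->
    typing K S ((x, A) :: G) q q' (EShare x x1 x2 e) B
| ty_relax G e A p p' q q' :
    typing K S G p p' e A -> p <= q -> q - p <= q' - p' -> jok G q q' A ->
    typing K S G q q' e A
| ty_weak G x e A B q q' :
    typing K S G q q' e B -> share A A A -> jok ((x, A) :: G) q q' B ->
    typing K S ((x, A) :: G) q q' e B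
| ty_subtype G e A B q q' :
    typing K S G q q' e A -> subty A B -> jok G q q' B -> typing K S G q q' e B
| ty_supertype G x e A B C q q' :
    typing K S ((x, B) :: G) q q' e C -> subty A B -> jok ((x, A) :: G) q q' C ->
    typing K S ((x, A) :: G) q q' e C
| ty_perm G G' e A q q' :
    typing K S G q q' e A -> Permutation G G' -> typing K S G' q q' e A.

Definition well_typed (K : costs) (P : program) (S : signature) : Prop :=
  forall f t, S f t -> typing K S [(pparam P f, farg t)] (fq t) (fq' t) (pbody P f) (fres t).

From Pilot Require Import Defs.
From Stdlib Require Import QArith Qcanon ZArith List Permutation Lqa.
Import ListNotations.
Open Scope Q_scope.

(* In the lower-bound system every syntax-directed rule accounts exactly for the
   constant costs and for the potential moved between context and result (sharing
   splits potential, [cons]/[match] trade one list annotation [p] against the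
   counter), while the structural rules can only decrease the typed net cost
   [q + Phi_E(Gamma) - q' - Phi(v:A)]: relaxation by definition, weakening adds a
   variable of zero potential, subtyping raises the result potential and supertyping
   lowers the context potential.  By induction on the evaluation (a called body is
   typed by the well-typedness of the program, not by a subderivation) and inside on
   the typing derivation, the typed net cost is therefore at most the actual net cost
   [p - p'] of every evaluation; a run with [p < q + Phi_E(Gamma) + r] and
   [p' >= q' + Phi(v:A) + r] would violate this. *)

Lemma pot_list_cons p A w ws :
  pot (VList (w :: ws)) (AList p A) == this p + pot w A + pot (VList ws) (AList p A).
Proof.
  cbn [pot length fold_right].
  rewrite Nat2Z.inj_succ, <- Z.add_1_r, inject_Z_plus; change (inject_Z 1) with 1.
  ring.
Qed.

Lemma pot_list_nil p A : pot (VList []) (AList p A) == 0.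
Proof. cbn. ring. Qed.

Lemma pot_share A A1 A2 : share A A1 A2 -> forall v, pot v A == pot v A1 + pot v A2.
Proof.
  induction 1 as [| | |A B A1 B1 A2 B2 _ IHA _ IHB|p A p1 A1 p2 A2 _ IHA Hp];
    intros [| | |ws|w1 w2]; try (cbn [pot]; ring).
  - cbn [pot]; rewrite IHA, IHB; ring.
  - induction ws as [|w ws IHws]; [rewrite !pot_list_nil; ring|].
    rewrite !pot_list_cons, IHws, IHA, Hp; ring.
Qed.

Lemma pot_share_diag A v : share A A A -> pot v A == 0.
Proof. intros HA; generalize (pot_share _ _ _ HA v); lra. Qed.

Lemma pot_subty A B : subty A B -> forall v, pot v A <= pot v B.
Proof.
  induction 1 as [| | |p1 A1 p2 A2 _ IHA Hp|A1 B1 A2 B2 _ IHA _ IHB];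
    intros [| | |ws|w1 w2]; try (cbn [pot]; lra).
  - induction ws as [|w ws IHws]; [rewrite !pot_list_nil; lra|].
    rewrite !pot_list_cons; generalize (IHA w); lra.
  - cbn [pot]; generalize (IHA w1) (IHB w2); lra.
Qed.

Lemma ctx_pot_cons_some E x w A G :
  E x = Some w -> ctx_pot E ((x, A) :: G) = pot w A + ctx_pot E G.
Proof. intros Hx; cbn [ctx_pot fold_right fst snd]; now rewrite Hx. Qed.

Lemma ctx_pot_app E G1 G2 : ctx_pot E (G1 ++ G2) == ctx_pot E G1 + ctx_pot E G2.
Proof. induction G1 as [|xA G1 IH]; simpl; [lra|rewrite IH; lra]. Qed.

Lemma ctx_pot_perm E G G' : Permutation G G' -> ctx_pot E G == ctx_pot E G'.
Proof. induction 1; simpl; lra. Qed.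

Lemma ctx_pot_agree E E' G :
  (forall x, In x (map fst G) -> E' x = E x) -> ctx_pot E' G = ctx_pot E G.
Proof.
  induction G as [|[y A] G IH]; intros Hagree; [reflexivity|].
  cbn [ctx_pot fold_right fst snd map In] in *.
  rewrite Hagree by now left. fold (ctx_pot E' G) (ctx_pot E G).
  rewrite IH; auto.
Qed.

Lemma ctx_pot_upd E x w G : ~ In x (map fst G) -> ctx_pot (upd E x w) G = ctx_pot E G.
Proof.
  intros Hx; apply ctx_pot_agree; intros y Hy; unfold upd.
  destruct (Nat.eqb_spec y x); congruence.
Qed.

Lemma ctx_pot_remove E x G : ~ In x (map fst G) -> ctx_pot (Defs.remove E x) G = ctx_pot E G.
Proof.
  intros Hx; apply ctx_pot_agree; intros y Hy; unfold Defs.remove.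
  destruct (Nat.eqb_spec y x); congruence.
Qed.

Lemma ctx_ok_cons_notin x A G : ctx_ok ((x, A) :: G) -> ~ In x (map fst G).
Proof. now intros Hok; apply NoDup_cons_iff in Hok as [Hx _]. Qed.

Lemma upd_eq E x w : upd E x w x = Some w.
Proof. unfold upd; now rewrite Nat.eqb_refl. Qed.

Lemma ctx_pot_upd2 E x1 x2 w1 w2 A1 A2 G :
  ctx_ok ((x1, A1) :: (x2, A2) :: G) ->
  ctx_pot (upd (upd E x1 w1) x2 w2) ((x1, A1) :: (x2, A2) :: G)
  = pot w1 A1 + (pot w2 A2 + ctx_pot E G).
Proof.
  intros Hok; unfold ctx_ok in Hok; cbn [map fst] in Hok.
  apply NoDup_cons_iff in Hok as [Hx1 Hok]; apply NoDup_cons_iff in Hok as [Hx2 _].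
  cbn [In] in Hx1; apply Decidable.not_or in Hx1 as [Hx12 Hx1].
  assert (Hw1 : upd (upd E x1 w1) x2 w2 x1 = Some w1).
  { unfold upd; apply Nat.eqb_neq in Hx12; rewrite Nat.eqb_sym, Hx12, Nat.eqb_refl.
    reflexivity. }
  assert (Hw2 : upd (upd E x1 w1) x2 w2 x2 = Some w2) by apply upd_eq.
  rewrite (ctx_pot_cons_some _ _ _ _ _ Hw1), (ctx_pot_cons_some _ _ _ _ _ Hw2), !ctx_pot_upd;
    auto.
Qed.

Lemma jok_ctx_ok G q q' A : jok G q q' A -> ctx_ok G.
Proof. now intros [Hok _]. Qed.

Lemma typing_ctx_ok K S G q q' e A : typing K S G q q' e A -> ctx_ok G.
Proof.
  induction 1; eauto using jok_ctx_ok.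
  eapply Permutation_NoDup; [apply Permutation_map|]; eassumption.
Qed.

Definition cost_bound (E : env) (p p' : Q) (v : val) (G : ctx) (q q' : Q) (A : aty) : Prop :=
  q + ctx_pot E G - q' - pot v A <= p - p'.

Lemma cost_bound_relax E p p' v G q0 q0' q q' A :
  cost_bound E p p' v G q0 q0' A -> q0 <= q -> q - q0 <= q' - q0' ->
  cost_bound E p p' v G q q' A.
Proof. unfold cost_bound; lra. Qed.

Lemma cost_bound_weak E p p' v G x q q' A B :
  cost_bound E p p' v G q q' B -> share A A A -> cost_bound E p p' v ((x, A) :: G) q q' B.
Proof.
  unfold cost_bound; intros Hb HA; simpl.
  destruct (E x) as [w|]; [rewrite (pot_share_diag _ w HA)|]; lra.
Qed.

Lemma cost_bound_subty E p p' v G q q' A B :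
  cost_bound E p p' v G q q' A -> subty A B -> cost_bound E p p' v G q q' B.
Proof. unfold cost_bound; intros Hb HAB; generalize (pot_subty _ _ HAB v); lra. Qed.

Lemma cost_bound_supty E p p' v G x q q' A B C :
  cost_bound E p p' v ((x, B) :: G) q q' C -> subty A B ->
  cost_bound E p p' v ((x, A) :: G) q q' C.
Proof.
  unfold cost_bound; simpl; intros Hb HAB.
  destruct (E x) as [w|]; [generalize (pot_subty _ _ HAB w)|]; lra.
Qed.

Lemma cost_bound_perm E p p' v G G' q q' A :
  cost_bound E p p' v G q q' A -> Permutation G G' -> cost_bound E p p' v G' q q' A.
Proof. unfold cost_bound; intros Hb HG; rewrite <- (ctx_pot_perm E _ _ HG); lra. Qed.

Lemma cost_bound_transfer E E' p p' pa pa' v G G' q q' qa qa' A :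
  cost_bound E' pa pa' v G' qa qa' A ->
  q + ctx_pot E G - q' - (p - p') == qa + ctx_pot E' G' - qa' - (pa - pa') ->
  cost_bound E p p' v G q q' A.
Proof. unfold cost_bound; lra. Qed.

Lemma cost_bound_seq E E' x p p1 p' v1 v G1 G2 q q1 q' A1 A2 :
  cost_bound E p p1 v1 G1 q q1 A1 -> cost_bound E' p1 p' v ((x, A1) :: G2) q1 q' A2 ->
  E' x = Some v1 -> ctx_pot E' G2 = ctx_pot E G2 ->
  cost_bound E p p' v (G1 ++ G2) q q' A2.
Proof.
  unfold cost_bound; intros H1 H2 Hx HG2.
  rewrite (ctx_pot_cons_some _ _ _ _ _ Hx), HG2 in H2; rewrite ctx_pot_app; lra.
Qed.

(* Dispatching on the hypotheses before [apply] avoids failed unifications, which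
   would unfold the rational arithmetic inside [cost_bound]. *)
Ltac close_structural :=
  match goal with IH : ?a = ?b -> _, He : ?a = ?b |- _ => specialize (IH He) end;
  match goal with
  | IH : cost_bound ?E ?p ?p' ?v ?G ?q0 ?q0' ?A, H : ?q - ?q0 <= ?q' - ?q0'
    |- cost_bound ?E ?p ?p' ?v ?G ?q ?q' ?A =>
      apply cost_bound_relax with (1 := IH); assumption
  | IH : cost_bound ?E ?p ?p' ?v ?G ?q ?q' ?B, H : share ?A ?A ?A
    |- cost_bound ?E ?p ?p' ?v ((_, ?A) :: ?G) ?q ?q' ?B =>
      apply cost_bound_weak with (1 := IH); assumption
  | IH : cost_bound ?E ?p ?p' ?v ?G ?q ?q' ?A, H : subty ?A ?B
    |- cost_bound ?E ?p ?p' ?v ?G ?q ?q' ?B =>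
      apply cost_bound_subty with (1 := IH); assumption
  | IH : cost_bound ?E ?p ?p' ?v ((?x, ?B) :: ?G) ?q ?q' ?C, H : subty ?A ?B
    |- cost_bound ?E ?p ?p' ?v ((?x, ?A) :: ?G) ?q ?q' ?C =>
      apply cost_bound_supty with (1 := IH); assumption
  | IH : cost_bound ?E ?p ?p' ?v ?G ?q ?q' ?A, H : Permutation ?G ?G'
    |- cost_bound ?E ?p ?p' ?v ?G' ?q ?q' ?A =>
      apply cost_bound_perm with (1 := IH); assumption
  end.

Lemma eval_cost_bound K P S E p p' e v : well_typed K P S ->
  eval K P E p p' e v -> forall G q q' A, typing K S G q q' e A -> cost_bound E p p' v G q q' A.
Proof.
  intros Hwt; induction 1; intros G0 qt qt' At Hty;
    match type of Hty with typing _ _ _ _ _ ?e _ => remember e as e0 eqn:He end;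
    induction Hty; try discriminate He; try close_structural; try (injection He; intros; subst).
  - unfold cost_bound; cbn; lra.
  - unfold cost_bound; cbn; lra.
  - unfold cost_bound; cbn; lra.
  - unfold cost_bound; rewrite pot_list_nil; cbn; lra.
  - unfold cost_bound; erewrite ctx_pot_cons_some by eassumption; cbn; lra.
  - unfold cost_bound; do 2 erewrite ctx_pot_cons_some by eassumption.
    destruct o; cbn; lra.
  - unfold cost_bound; do 2 erewrite ctx_pot_cons_some by eassumption; cbn; lra.
  - unfold cost_bound; do 2 erewrite ctx_pot_cons_some by eassumption.
    rewrite pot_list_cons; cbn [ctx_pot fold_right]; lra.
  - eapply cost_bound_transfer; [apply IHeval, Hwt; eassumption|].
    erewrite !ctx_pot_cons_some by (eassumption || apply upd_eq). cbn; lra.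
  - eapply cost_bound_transfer.
    + eapply cost_bound_seq; eauto using upd_eq.
      apply ctx_pot_upd; eauto using ctx_ok_cons_notin, typing_ctx_ok.
    + lra.
  - eapply cost_bound_transfer; [eauto|].
    erewrite ctx_pot_cons_some by eassumption; cbn [pot]; lra.
  - eapply cost_bound_transfer; [eauto|].
    erewrite ctx_pot_cons_some by eassumption; cbn [pot]; lra.
  - eapply cost_bound_transfer; [eauto|].
    rewrite ctx_pot_upd2 by eauto using typing_ctx_ok.
    erewrite ctx_pot_cons_some by eassumption; cbn [pot]; lra.
  - eapply cost_bound_transfer; [eauto|].
    erewrite ctx_pot_cons_some by eassumption; rewrite pot_list_nil; lra.
  - eapply cost_bound_transfer; [eauto|].
    rewrite ctx_pot_upd2 by eauto using typing_ctx_ok.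
    erewrite ctx_pot_cons_some by eassumption; rewrite pot_list_cons; lra.
  - eapply cost_bound_transfer; [eauto|].
    rewrite ctx_pot_upd2, ctx_pot_remove
      by eauto using typing_ctx_ok, ctx_ok_cons_notin, jok_ctx_ok.
    erewrite ctx_pot_cons_some by eassumption; erewrite pot_share by eassumption; lra.
Qed.

Theorem theorem5 (K : costs) (P : program) (S : signature)
  (HS : is_signature S) (Hwt : well_typed K P S)
  (E : env) (G : ctx) (e : expr) (v : val) (A : aty) (q q' : Q)
  (HEG : env_models E G) (Hev : evals K P E e v) (Hty : typing K S G q q' e A) :
  forall p r : Q, 0 <= p -> 0 <= r -> p < q + ctx_pot E G + r ->
  ~ (exists p' : Q, 0 <= p' /\ eval K P E p p' e v /\ q' + pot v A + r <= p').
Proof.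
  intros p r _ _ Hlt [p' [_ [Hevp Hle]]].
  assert (Hb : cost_bound E p p' v G q q' A) by (eapply eval_cost_bound; eassumption).
  unfold cost_bound in Hb; lra.
Qed.
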